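(* There exist constants $\beta\in(0,1)$, $C>0$ and $c>0$ such that for every $m>0$, every odd $n\ge5$, every $\epsilon\in(0,1)$ with $n\epsilon\ge C$, and every $\epsilon$-differentially private mechanism $\mathcal{M}:V^n\to V$, there is some $D\in\mathcal{CTM}$ with $$\mathrm{SWDIFF}(D,\mathcal{M}(D))\ge c\,\frac{m}{n\epsilon^2}\left(\ln\frac1\beta\right)^2$$ with probability at least $\beta$.
   Context: $V=[-m/2,m/2]$. A dataset is $D=(x_1,\dots,x_n)\in V^n$ (a multiset), indexed so that $x_1\le\dots\le x_n$, with median (optimal location) $\mathcal{T}(D)=x_{\lceil n/2\rceil}$. $\mathrm{SWDIFF}(D,\ell)=\sum_{i=1}^n|x_i-\ell|-\sum_{i=1}^n|x_i-\mathcal{T}(D)|$. $\mathcal{CTM}$ is the set of datasets with $|x_{i+1}-x_i|\ge|x_{j+1}-x_j|$ for all $1\le i<j\le\lceil n/2\rceil-1$ and $|x_i-x_{i-1}|\ge|x_j-x_{j-1}|$ for all $\lceil n/2\rceil+1\le j<i\le n$. Two datasets are neighboring if, as multisets, they differ in exactly one element; $\mathcal{M}$ is $\epsilon$-differentially private if $\Pr[\mathcal{M}(D)\in S]\le e^{\epsilon}\Pr[\mathcal{M}(D')\in S]$ for all neighboring $D,D'$ and measurable $S\subseteq V$. *)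

From HB Require Import structures.
From mathcomp Require Import all_boot all_order all_algebra.
From mathcomp Require Import all_classical all_reals all_analysis.
From mathcomp Require Import Rstruct Rstruct_topology.
Set Implicit Arguments. Unset Strict Implicit. Unset Printing Implicit Defensive.
Import Order.TTheory GRing.Theory Num.Theory.
Local Open Scope ring_scope.
Local Open Scope classical_set_scope.

Notation RR := Rdefinitions.R.
Notation RB := (measurableTypeR RR).

Definition Vset (m : RR) : set RR := `[- (m / 2), m / 2]%classic.

(* A dataset of size n with all entries in V (order of the tuple irrelevant:
   datasets are multisets, see [mech_sym]). *)
Definition in_V (m : RR) (n : nat) (D : n.-tuple RR) : Prop :=
  forall i : 'I_n, tnth D i \in `[- (m / 2), m / 2].

(* sorted version x_1 <= ... <= x_n ; 1-based access x i = nth 0 (sort D) (i-1) *)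
Definition sorted_ds (n : nat) (D : n.-tuple RR) : seq RR :=
  sort (fun x y : RR => x <= y) D.
Definition xi (n : nat) (D : n.-tuple RR) (i : nat) : RR :=
  nth 0 (sorted_ds D) i.-1.

Definition half_up (n : nat) : nat := uphalf n.

(* optimal location: the median x_{ceil(n/2)} *)
Definition medianT (n : nat) (D : n.-tuple RR) : RR := xi D (half_up n).

Definition SWDIFF (n : nat) (D : n.-tuple RR) (l : RR) : RR :=
  \sum_(i < n) `|tnth D i - l| - \sum_(i < n) `|tnth D i - medianT D|.

Definition CTM (n : nat) (D : n.-tuple RR) : Prop :=
  (forall i j : nat, (1 <= i)%N -> (i < j)%N -> (j <= (half_up n).-1)%N ->
     `|xi D i.+1 - xi D i| >= `|xi D j.+1 - xi D j|) /\
  (forall i j : nat, ((half_up n).+1 <= j)%N -> (j < i)%N -> (i <= n)%N ->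
     `|xi D i - xi D i.-1| >= `|xi D j - xi D j.-1|).

(* neighboring datasets: as multisets they differ in (at most) one element,
   i.e. one is obtained from the other by replacing one entry. *)
Definition neighboring (n : nat) (D D' : n.-tuple RR) : Prop :=
  exists (s : seq RR) (x y : RR), perm_eq D (x :: s) /\ perm_eq D' (y :: s).

Definition is_mechanism (m : RR) (n : nat) (M : n.-tuple RR -> probability RB RR) : Prop :=
  (forall D : n.-tuple RR, in_V m D -> M D (Vset m) = 1%E) /\
  (* defined on multisets: invariant under reordering the dataset *)
  (forall D D' : n.-tuple RR, perm_eq D D' -> M D = M D').

Definition eps_DP (m eps : RR) (n : nat) (M : n.-tuple RR -> probability RB RR) : Prop :=
  forall D D' : n.-tuple RR, in_V m D -> in_V m D' -> neighboring D D' ->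
  forall S : set RB, measurable S -> S `<=` Vset m ->
    (M D S <= (expR eps)%:E * M D' S)%E.

From HB Require Import structures.
From mathcomp Require Import all_boot all_order all_algebra.
From mathcomp Require Import all_classical all_reals all_analysis.
From mathcomp Require Import Rstruct Rstruct_topology.
From mathcomp Require Import ring lra zify.
From Stdlib Require Rpower.
Import Order.TTheory GRing.Theory Num.Theory.
Local Open Scope ring_scope.
Local Open Scope classical_set_scope.

(* Let k = floor(1/eps) and let E_q be the sorted dataset of n consecutive points, starting
   at the q-th one, of the grid of step s = m/(n+k) in V.  Consecutive E_q are neighbours
   and all of them have equal gaps, hence lie in CTM; by group privacy M(E_0) and M(E_k)
   differ by a factor at most e^(k eps) <= 3 on subsets of V.  Their medians are k s apart.
   Moving the location a distance t >= k s/2 to the right of the median of E_0 (or to the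
   left of that of E_k) costs t for each of the h+1 points on the other side, at least 0 for
   the next k/4 points and at least -t for the remaining ones: a loss >= (k/4+1) t, which
   is of order m/(n eps^2).  If M(E_0) puts mass < 1/4 right of the midpoint of the two
   medians, it puts > 3/4 left of it, hence M(E_k) puts > 1/4 there.  So beta = 1/4. *)

Lemma ler_sum_ord3 (R : numDomainType) (F : nat -> R) (a b c : nat) (u v w : R) :
  (forall i, (i < a)%N -> u <= F i) ->
  (forall i, (a <= i < a + b)%N -> v <= F i) ->
  (forall i, (a + b <= i)%N -> w <= F i) ->
  a%:R * u + b%:R * v + c%:R * w <= \sum_(i < a + b + c) F i.
Proof.
move=> Fa Fb Fc.
have sum_const p (x : R) : \sum_(i < p) x = p%:R * x.
  by rewrite sumr_const card_ord mulr_natl.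
rewrite !big_split_ord /= -!sum_const.
apply: lerD; first apply: lerD; apply: ler_sum => i _ /=.
- exact: Fa.
- by apply: Fb; rewrite leq_addr ltn_add2l ltn_ord.
- by apply: Fc; rewrite leq_addr.
Qed.

Lemma sum_dist_gain_right (R : realDomainType) (x : nat -> R) (h j : nat) (l : R) :
  {homo x : a b / (a <= b)%N >-> a <= b} -> (j <= h)%N ->
  x h <= l -> 2 * (x (h + j)%N - x h) <= l - x h ->
  j.+1%:R * (l - x h) <= \sum_(i < h.*2.+1) (`|x i - l| - `|x i - x h|).
Proof.
move=> x_homo jh xhl gap_small.
rewrite (_ : h.*2.+1 = h.+1 + j + (h - j))%N; last by lia.
apply: le_trans (@ler_sum_ord3 _ (fun i => `|x i - l| - `|x i - x h|)
  h.+1 j (h - j) (l - x h) 0 (- (l - x h)) _ _ _).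
- rewrite natrB // -!natr1; lra.
- move=> i ih; have xih : x i <= x h by apply: x_homo; lia.
  rewrite !ler0_norm ?subr_le0 //; last exact: le_trans xhl.
  lra.
- move=> i /andP[hi ihj].
  have xhi : x h <= x i by apply: x_homo; lia.
  have xihj : x i <= x (h + j)%N by apply: x_homo; lia.
  have := ler_norm (l - x i); rewrite distrC (ger0_norm (x := x i - x h)) ?subr_ge0 //.
  lra.
- move=> i _; have := ler_distD l (x i) (x h).
  rewrite (ger0_norm (x := l - x h)) ?subr_ge0 //.
  lra.
Qed.

Lemma sum_dist_gain_left (R : realDomainType) (x : nat -> R) (h j : nat) (l : R) :
  {homo x : a b / (a <= b)%N >-> a <= b} -> (j <= h)%N ->
  l <= x h -> 2 * (x h - x (h - j)%N) <= x h - l ->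
  j.+1%:R * (x h - l) <= \sum_(i < h.*2.+1) (`|x i - l| - `|x i - x h|).
Proof.
move=> x_homo jh lxh gap_small.
pose y i := - x (h.*2 - i)%N.
have y_homo : {homo y : a b / (a <= b)%N >-> a <= b}.
  by move=> a b ab; rewrite lerN2; apply: x_homo; apply: leq_sub2l.
have yh : y h = - x h by rewrite /y -addnn addnK.
have yhj : y (h + j)%N = - x (h - j)%N by rewrite /y -addnn subnDl.
have := @sum_dist_gain_right _ y h j (- l) y_homo jh.
rewrite yh yhj !opprK (addrC (- l)) (addrC (- x (h - j)%N)) => /(_ _ _)/le_trans; apply.
- by rewrite lerN2.
- exact: gap_small.
rewrite [X in _ <= X](reindex_inj rev_ord_inj); apply: ler_sum => i _.
by rewrite /y /= subSS !(addrC (- x _)) (distrC l) (distrC (x h)).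
Qed.

Lemma window_subproof (n : nat) (f : nat -> RR) (q : nat) :
  size (map f (iota q n)) == n.
Proof. by rewrite size_map size_iota. Qed.

Definition window (n : nat) (f : nat -> RR) (q : nat) : n.-tuple RR :=
  Tuple (window_subproof n f q).

Section Window.
Variables (n : nat) (f : nat -> RR).

Lemma tnth_window q (i : 'I_n) : tnth (window n f q) i = f (q + i)%N.
Proof. by rewrite (tnth_nth 0) /= (nth_map 0) ?size_iota // nth_iota. Qed.

Lemma SWDIFF_window q l : SWDIFF (window n f q) l =
  \sum_(i < n) (`|f (q + i)%N - l| - `|f (q + i)%N - medianT (window n f q)|).
Proof. by rewrite /SWDIFF -sumrB; apply: eq_bigr => i _; rewrite tnth_window. Qed.

Lemma window_neighboring q : (0 < n)%N -> neighboring (window n f q) (window n f q.+1).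
Proof.
case: n => [//|n'] _; exists (map f (iota q.+1 n')), (f q), (f (q.+1 + n')%N).
split; first by [].
change (perm_eq (map f (iota q.+1 n'.+1)) (f (q.+1 + n') :: map f (iota q.+1 n'))).
by rewrite -[n'.+1]addn1 iotaD map_cat cats1 perm_rcons.
Qed.

Hypothesis f_homo : {homo f : a b / (a <= b)%N >-> a <= b}.

Lemma xi_window q i : (0 < i <= n)%N -> xi (window n f q) i = f (q + i.-1)%N.
Proof.
move=> /andP[i_gt0 i_le].
rewrite /xi /sorted_ds sorted_sort; last first.
- rewrite /= sorted_map; apply: sub_sorted (iota_sorted q n) => a b /= ab; exact: f_homo.
- exact: le_trans.
by rewrite /= (nth_map 0) ?size_iota ?nth_iota //; lia.
Qed.

Lemma medianT_window q h : n = h.*2.+1 -> medianT (window n f q) = f (q + h)%N.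
Proof.
move=> nE; have hu : half_up n = h.+1 by rewrite /half_up nE /= half_double.
by rewrite /medianT hu xi_window //; lia.
Qed.

End Window.

Lemma CTM_window (n : nat) (f : nat -> RR) (s : RR) q :
  0 <= s -> (forall p, f p.+1 = f p + s) -> CTM (window n f q).
Proof.
move=> s_ge0 f_step.
have f_homo : {homo f : a b / (a <= b)%N >-> a <= b}.
  by apply/nondecreasing_seqP => p; rewrite f_step lerDl.
have gap i : (0 < i < n)%N -> `|xi (window n f q) i.+1 - xi (window n f q) i| = `|s|.
  move=> /andP[i_gt0 i_lt]; rewrite !(xi_window _ _ f_homo) /=; try by lia.
  by rewrite -(prednK i_gt0) addnS f_step addrAC subrr add0r.
have /andP[half_le half_ge] : (half_up n <= n <= 2 * half_up n)%N.
  by rewrite /half_up uphalfE; apply/andP; split; lia.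
split=> [i i' i_ge1 ii' i'_le | i i' i'_ge ii' i_le].
- by rewrite !gap //; apply/andP; split; lia.
- have [i_gt0 i'_gt0] : (0 < i)%N /\ (0 < i')%N by split; lia.
  rewrite -(prednK i_gt0) -(prednK i'_gt0) /= !gap //; apply/andP; split; lia.
Qed.

Lemma measurable_SWDIFF_ge (n : nat) (D : n.-tuple RR) (T : RR) :
  measurable [set l : RB | T <= SWDIFF D l].
Proof.
have mSW : measurable_fun setT (SWDIFF D : RB -> RB).
  apply: measurable_realfun.measurable_funB; last exact: measurable_cst.
  apply: (@measurable_sum _ _ _ _ _ _ (fun i (l : RB) => `|tnth D i - l|)) => i.
  apply: measurableT_comp (@measurable_realfun.normr_measurable RR setT) _.
  by apply: measurable_realfun.measurable_funB; [exact: measurable_cst | exact: measurable_id].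
rewrite -[X in measurable X]setTI -[X in _ `&` X](_ : SWDIFF D @^-1` `[T, +oo[%classic = _).
- exact: mSW measurableT _ (measurable_itv _).
- by apply/seteqP; split => x /=; rewrite in_itv /= andbT.
Qed.

Lemma eps_DP_group (m eps : RR) (n : nat) (M : n.-tuple RR -> probability RB RR)
    (E : nat -> n.-tuple RR) (k : nat) (S : set RB) :
  eps_DP m eps M -> (forall q, (q <= k)%N -> in_V m (E q)) ->
  (forall q, neighboring (E q) (E q.+1)) -> measurable S -> S `<=` Vset m ->
  (M (E 0%N) S <= (expR (k%:R * eps))%:E * M (E k) S)%E.
Proof.
move=> DP E_V E_nb mS SV; elim: k E_V => [|k IHk] E_V.
  by rewrite mul0r exp.expR0 mul1e.
apply: le_trans (IHk (fun q qk => E_V q (leqW qk))) _.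
rewrite -natr1 mulrDl mul1r exp.expRD EFinM -muleA lee_pmul2l ?lte_fin ?expR_gt0 //.
exact: DP (E_V _ (leqW (leqnn k))) (E_V _ (leqnn _)) (E_nb k) S mS SV.
Qed.

Lemma probability_dichotomy d (T : measurableType d) (R : realType) (P Q : probability T R)
    (V A B : set T) :
  measurable V -> measurable A -> measurable B -> P V = 1%E -> V `<=` A `|` B ->
  (P A <= 3%:E * Q A)%E -> ((1/4)%:E <= P B)%E \/ ((1/4)%:E <= Q A)%E.
Proof.
move=> mV mA mB PV VAB PQ.
have PAB : (1 <= P A + P B)%E.
  rewrite -PV; apply: le_trans (measureU2 _ mA mB).
  by apply: le_measure; rewrite ?inE //; exact: measurableU.
move: PAB PQ; rewrite -(fineK (fin_num_measure P _ mA)) -(fineK (fin_num_measure P _ mB)).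
rewrite -(fineK (fin_num_measure Q _ mA)) -EFinD -EFinM !lee_fin => PAB PQ.
have QA_ge0 := fine_ge0 (measure_ge0 Q A).
by case: (leP (1/4) (fine (P B))) => PB; [left | right; lra].
Qed.

Lemma expR1_le3 : expR (1 : RR) <= 3.
Proof. by have /RleP := Rpower.exp_le_3; rewrite RexpE. Qed.

Lemma lower_bound_le_gain (R : realFieldType) (m n k eps s j : R) :
  0 < m -> 0 < eps -> 1 < 2 * (k * eps) -> k <= n -> s * (n + k) = m -> k <= 4 * j ->
  m / (64 * n * eps ^+ 2) <= j * (k * s / 2).
Proof.
move=> m_gt0 eps_gt0 keps kn snk kj.
have k_gt0 : 0 < k by nra.
have s_gt0 : 0 < s by nra.
rewrite ler_pdivrMr; last by rewrite !mulr_gt0 ?exprn_gt0 //; lra.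
have ke2 : 1 <= 4 * (k * eps) ^+ 2 by nra.
have : s * (n + k) <= 2 * s * n by nra.
have : 2 * s * n <= 2 * s * n * (4 * (k * eps) ^+ 2) by rewrite ler_peMr //; nra.
have : k * s * n * eps ^+ 2 * k <= k * s * n * eps ^+ 2 * (4 * j).
  by rewrite ler_pM2l ?mulr_gt0 ?exprn_gt0 //; lra.
nra.
Qed.

Definition grid (m s : RR) (p : nat) : RR := - (m / 2) + p.+1%:R * s.

Lemma grid_succ m s p : grid m s p.+1 = grid m s p + s.
Proof. by rewrite /grid -natr1; ring. Qed.

Lemma grid_addn m s p a : grid m s (p + a) = grid m s p + a%:R * s.
Proof. by rewrite /grid -addSn natrD; ring. Qed.

Lemma grid_homo m s : 0 <= s -> {homo grid m s : a b / (a <= b)%N >-> a <= b}.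
Proof. by move=> s_ge0; apply/nondecreasing_seqP => p; rewrite grid_succ lerDl. Qed.

Section HardInstances.
Variables (m eps : RR) (n : nat).
Hypotheses (m_gt0 : 0 < m) (n_odd : odd n) (eps_gt0 : 0 < eps) (eps_lt1 : eps < 1)
  (neps_ge4 : 4 <= n%:R * eps).

Let k := Num.truncn eps^-1.
Let h := n./2.
Let s := m / (n + k)%:R.
Let E q := window n (grid m s) q.
Let mid := grid m s h + k%:R * s / 2.
Let T := m / (64 * n%:R * eps ^+ 2).

Lemma n_eq_double_half : n = h.*2.+1.
Proof. by rewrite -[LHS]odd_double_half n_odd. Qed.

Lemma k_bounds :
  [/\ (0 < k)%N, k%:R * eps <= 1, 1 < 2 * (k%:R * eps) & (4 * k <= n)%N].
Proof.
have eps_inv_ge1 : 1 <= eps^-1 by rewrite invf_ge1 // ltW.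
have /andP[k_le k_gt] := truncn_itv (le_trans ler01 eps_inv_ge1).
rewrite -/k in k_le k_gt.
have k_gt0 : (0 < k)%N by rewrite /k truncn_ge_nat // (le_trans ler01).
split => //.
- by rewrite -ler_pdivlMr // div1r.
- rewrite -[eps^-1]div1r ltr_pdivrMr // -natr1 in k_gt.
  have : 1 <= k%:R :> RR by rewrite ler1n.
  nra.
- rewrite -(ler_nat RR) natrM.
  apply: le_trans (_ : 4 * eps^-1 <= n%:R); first by rewrite ler_pM2l.
  by rewrite ler_pdivrMr // mulrC.
Qed.

Lemma nk_gt0 : (0 < n + k)%N.
Proof. by rewrite addn_gt0; case: k_bounds => [-> _ _ _]; rewrite orbT. Qed.

Lemma s_gt0 : 0 < s.
Proof. by rewrite divr_gt0 // ltr0n nk_gt0. Qed.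

Lemma mul_nk_s : (n + k)%:R * s = m.
Proof. by rewrite mulrC divfK // pnatr_eq0 -lt0n nk_gt0. Qed.

Lemma E_in_V q : (q <= k)%N -> in_V m (E q).
Proof.
move=> qk i; rewrite tnth_window inE /= in_itv /= /grid.
have p_ge0 : 0 <= (q + i).+1%:R * s by rewrite mulr_ge0 ?ltW ?s_gt0.
have p_le : (q + i).+1%:R * s <= m.
  by rewrite -mul_nk_s ler_pM2r ?s_gt0 // ler_nat; move: (ltn_ord i); lia.
apply/andP; split; lra.
Qed.

Lemma E_neighboring q : neighboring (E q) (E q.+1).
Proof. by apply: window_neighboring; rewrite n_eq_double_half. Qed.

Lemma E_CTM q : CTM (E q).
Proof. exact: CTM_window _ _ _ _ (ltW s_gt0) (grid_succ m s). Qed.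

Lemma T_le_gain : T <= (k %/ 4).+1%:R * (k%:R * s / 2).
Proof.
case: k_bounds => _ _ k_eps k_n.
apply: lower_bound_le_gain => //.
- by rewrite ler_nat; lia.
- by rewrite mulrC -natrD mul_nk_s.
- by rewrite -natrM ler_nat; lia.
Qed.

Lemma quarter_shift_bounds : 0 <= 2 * ((k %/ 4)%:R * s) <= k%:R * s / 2.
Proof.
have four_j : (4 * (k %/ 4))%:R <= k%:R :> RR by rewrite ler_nat; lia.
rewrite natrM in four_j; have s_pos := s_gt0.
have j_ge0 : 0 <= (k %/ 4)%:R :> RR := ler0n _ _.
apply/andP; split; nra.
Qed.

Lemma E0_gain l : mid <= l -> T <= SWDIFF (E 0) l.
Proof.
move=> mid_l; case: k_bounds => _ _ _ k_n; have := quarter_shift_bounds.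
have homo := grid_homo m s (ltW s_gt0).
rewrite SWDIFF_window (medianT_window _ _ homo _ _ n_eq_double_half) n_eq_double_half.
move=> /andP[j_ge0 j_le]; rewrite /mid in mid_l.
apply: le_trans T_le_gain
  (le_trans _ (@sum_dist_gain_right _ (grid m s) h (k %/ 4) l homo _ _ _)).
- by rewrite ler_pM2l ?ltr0n //; lra.
- by move: n_eq_double_half; lia.
- lra.
- by rewrite grid_addn; lra.
Qed.

Lemma Ek_gain l : l <= mid -> T <= SWDIFF (E k) l.
Proof.
move=> l_mid; case: k_bounds => _ _ _ k_n; have := quarter_shift_bounds.
have homo := grid_homo m s (ltW s_gt0).
rewrite SWDIFF_window (medianT_window _ _ homo _ _ n_eq_double_half) n_eq_double_half.
move=> /andP[j_ge0 j_le]; rewrite /mid in l_mid.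
have kh : grid m s (k + h) = grid m s h + k%:R * s by rewrite addnC grid_addn.
apply: le_trans T_le_gain
  (le_trans _ (@sum_dist_gain_left _ (fun i => grid m s (k + i)) h (k %/ 4) l _ _ _ _)).
- by rewrite kh ler_pM2l ?ltr0n //; lra.
- by move=> a b ab; apply: homo; rewrite leq_add2l.
- by move: n_eq_double_half; lia.
- by rewrite kh; lra.
- have gj : grid m s (k + h) = grid m s (k + (h - k %/ 4)) + (k %/ 4)%:R * s.
    by rewrite -grid_addn; congr grid; move: n_eq_double_half; lia.
  lra.
Qed.

Variable M : n.-tuple RR -> probability RB RR.
Hypotheses (M_mech : is_mechanism m M) (M_DP : eps_DP m eps M).

Lemma hard_instance :
  exists D : n.-tuple RR, in_V m D /\ CTM D /\
    ((1/4)%:E <= M D [set l : RR | (T <= SWDIFF D l)%R])%E.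
Proof.
pose A : set RB := Vset m `&` [set` `]-oo, mid[%R].
have mV : measurable (Vset m : set RB) by exact: measurable_itv.
have mA : measurable A by apply: measurableI => //; exact: measurable_itv.
have E0_big : (M (E 0) A <= 3%:E * M (E k) A)%E.
  apply: le_trans
    (@eps_DP_group m eps n M E k A M_DP E_in_V E_neighboring mA (@subIsetl _ _ _)) _.
  rewrite lee_wpmul2r ?lee_fin //; apply: le_trans expR1_le3.
  by case: k_bounds => _ k_eps _ _; rewrite ler_expR.
have V_split : Vset m `<=` A `|` [set l | T <= SWDIFF (E 0) l].
  move=> l Vl; case: (ltP l mid) => [l_lt | mid_le]; [left | right].
  - by split => //=; rewrite in_itv.
  - exact: E0_gain.
have [] := @probability_dichotomy _ _ _ (M (E 0)) (M (E k)) _ _ _ mV mA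
  (measurable_SWDIFF_ge _ _ _) (M_mech.1 _ (E_in_V _ (leq0n k))) V_split E0_big.
- by exists (E 0); split; [exact: E_in_V | split; [exact: E_CTM |]].
- move=> Ek_big; exists (E k); split; [exact: E_in_V | split; [exact: E_CTM |]].
  apply: le_trans Ek_big (le_measure _ _ _ _); rewrite ?inE //.
    exact: measurable_SWDIFF_ge.
  by move=> l [_ /=]; rewrite in_itv => /ltW; exact: Ek_gain.
Qed.

End HardInstances.

Theorem theorem7p22 :
  exists (beta C c : RR), 0 < beta < 1 /\ 0 < C /\ 0 < c /\
  forall (m : RR) (n : nat) (eps : RR)
         (M : n.-tuple RR -> probability RB RR),
    0 < m -> odd n -> (5 <= n)%N -> 0 < eps < 1 -> C <= n%:R * eps ->
    is_mechanism m M -> eps_DP m eps M ->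
    exists D : n.-tuple RR, in_V m D /\ CTM D /\
      (beta%:E <= M D [set l : RR | (c * (m / (n%:R * eps ^+ 2)) * (ln (beta^-1)) ^+ 2
                               <= SWDIFF D l)%R])%E.
Proof.
have ln4_gt0 : 0 < ln (4 : RR) by rewrite ln_gt0 //; lra.
exists (1/4), 4, (64 * ln 4 ^+ 2)^-1; split; first by apply/andP; split; lra.
split; first by lra.
split; first by rewrite invr_gt0 mulr_gt0 ?exprn_gt0.
move=> m n eps M m_gt0 n_odd _ /andP[eps_gt0 eps_lt1] neps M_mech M_DP.
have n_gt0 : 0 < n%:R :> RR.
  by rewrite ltr0n lt0n; apply: contraTneq neps => ->; rewrite mul0r; lra.
have -> : (64 * ln 4 ^+ 2)^-1 * (m / (n%:R * eps ^+ 2)) * ln ((1/4)^-1) ^+ 2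
          = m / (64 * n%:R * eps ^+ 2).
  by rewrite div1r invrK; field; rewrite !gt_eqF.
exact: hard_instance.
Qed.
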